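(* Let $(f,\bar f_0,\bar f_1):A\to B$ be a bipointed morphism. Then the canonical function $\pi_f:\mathsf{isbipequiv}(f,\bar f_0,\bar f_1)\to\mathsf{isequiv}(f)$ is an equivalence of types. Here $\pi_f$ sends $((g,\bar g_0,\bar g_1),p,(h,\bar h_0,\bar h_1),q)$ to the element of $\mathsf{isequiv}(f)$ obtained from $g,h:B\to A$ and the paths $\mathsf{Id}(g\circ f,1_A)$, $\mathsf{Id}(f\circ h,1_B)$ given by the first components of $p$ and $q$ (under the characterization of paths in $\Sigma$-types), via the standard equivalence $\mathsf{isequiv}(f)\simeq(\Sigma g:B\to A)\mathsf{Id}(g\circ f,1_A)\times(\Sigma h:B\to A)\mathsf{Id}(f\circ h,1_B)$. In particular, a bipointed morphism is a bipointed equivalence if and only if its underlying function is an equivalence.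
   Context: We work in the intensional Martin-Löf type theory $\mathcal H$ ($\Sigma$, $\Pi$, identity types, a universe $\mathsf U$ à la Russell closed under these, judgemental $\eta$ for $\Pi$, function extensionality; no identity reflection, K or UIP). For paths $p:\mathsf{Id}(a,b)$, $q:\mathsf{Id}(b,c)$, $q\cdot p:\mathsf{Id}(a,c)$ is their composite, $1_a=\mathsf{refl}(a)$, and $h\circ p$ is the action of a function $h$ on $p$. $\mathsf{iscontr}(X)=(\Sigma x:X)(\Pi y:X)\mathsf{Id}_X(x,y)$; $\mathsf{isequiv}(f)=(\Pi y:B)\mathsf{iscontr}((\Sigma x:A)\mathsf{Id}(fx,y))$. A bipointed type is a triple $(A,a_0,a_1)$ with $a_0,a_1:A$. For bipointed types $A=(A,a_0,a_1)$, $B=(B,b_0,b_1)$, a bipointed morphism is $(f,\bar f_0,\bar f_1)$ with $f:A\to B$, $\bar f_k:\mathsf{Id}(fa_k,b_k)$; $\mathsf{Bip}(A,B)$ is their type. The composite of $(f,\bar f_0,\bar f_1):A\to B$ and $(g,\bar g_0,\bar g_1):B\to C$ is $(g\circ f,\ \bar g_0\cdot(g\circ\bar f_0),\ \bar g_1\cdot(g\circ\bar f_1))$; the identity is $1_A=(\lambda x.x,1_{a_0},1_{a_1})$. For $f:\mathsf{Bip}(A,B)$, $\mathsf{isbipequiv}(f)=(\Sigma g:\mathsf{Bip}(B,A))\mathsf{Id}_{\mathsf{Bip}(A,A)}(g\circ f,1_A)\times(\Sigma h:\mathsf{Bip}(B,A))\mathsf{Id}_{\mathsf{Bip}(B,B)}(f\circ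 h,1_B)$. *)

(** Identity types (Type-valued, so no UIP/K is available). *)
Inductive Id {A : Type} (a : A) : A -> Type := refl : Id a a.
Arguments refl {A a}, {A} a.

(** [concat p q] is the composite "q . p" of the paper (first p, then q). *)
Definition concat {A : Type} {x y z : A} (p : Id x y) (q : Id y z) : Id x z :=
  match q in Id _ z return Id x z with refl => p end.

Definition inv {A : Type} {x y : A} (p : Id x y) : Id y x :=
  match p in Id _ y return Id y x with refl => refl end.

Definition ap {A B : Type} (h : A -> B) {x y : A} (p : Id x y) : Id (h x) (h y) :=
  match p in Id _ y return Id (h x) (h y) with refl => refl end.

Definition iscontr (X : Type) : Type := { x : X & forall y : X, Id x y }.

Definition fib {A B : Type} (f : A -> B) (y : B) : Type := { x : A & Id (f x) y }.

Definition isequiv {A B : Type} (f : A -> B) : Type := forall y : B, iscontr (fib f y).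

Definition happly {X : Type} {P : X -> Type} {u v : forall x, P x} (p : Id u v)
  : forall x, Id (u x) (v x) :=
  fun x => match p in Id _ v return Id (u x) (v x) with refl => refl end.

Definition Funext : Type :=
  forall (X : Type) (P : X -> Type) (u v : forall x, P x), isequiv (@happly X P u v).

Record BipType : Type := { bcar :> Type; bpt0 : bcar; bpt1 : bcar }.

Definition Bip (A B : BipType) : Type :=
  { f : A -> B & (Id (f (bpt0 A)) (bpt0 B) * Id (f (bpt1 A)) (bpt1 B))%type }.

Definition bcomp {A B C : BipType} (g : Bip B C) (f : Bip A B) : Bip A C :=
  existT _ (fun x => projT1 g (projT1 f x))
    (concat (ap (projT1 g) (fst (projT2 f))) (fst (projT2 g)),
     concat (ap (projT1 g) (snd (projT2 f))) (snd (projT2 g))).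

Definition bid (A : BipType) : Bip A A := existT _ (fun x => x) (refl, refl).

Definition isbipequiv {A B : BipType} (f : Bip A B) : Type :=
  ({ g : Bip B A & Id (bcomp g f) (bid A) } *
   { h : Bip B A & Id (bcomp f h) (bid B) })%type.

Definition biinv {A B : Type} (f : A -> B) : Type :=
  ({ g : B -> A & Id (fun x => g (f x)) (fun x => x) } *
   { h : B -> A & Id (fun y => f (h y)) (fun y => y) })%type.

Definition bip_to_biinv {A B : BipType} (f : Bip A B) (e : isbipequiv f)
  : biinv (projT1 f) :=
  (existT (fun g : B -> A => Id (fun x => g (projT1 f x)) (fun x => x))
      (projT1 (projT1 (fst e))) (ap (@projT1 _ _) (projT2 (fst e))),
   existT (fun h : B -> A => Id (fun y => projT1 f (h y)) (fun y => y))
      (projT1 (projT1 (snd e))) (ap (@projT1 _ _) (projT2 (snd e)))).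

(** The standard map biinv f -> isequiv f (via quasi-inverse and adjointification). *)
Lemma concat_1p {A} {x y : A} (p : Id x y) : concat refl p = p.
Proof. destruct p; reflexivity. Qed.
Lemma concat_assoc {A} {x y z w : A} (p : Id x y) (q : Id y z) (r : Id z w) :
  concat p (concat q r) = concat (concat p q) r.
Proof. destruct r; reflexivity. Qed.
Lemma concat_Vp {A} {x y : A} (p : Id x y) : concat (inv p) p = refl.
Proof. destruct p; reflexivity. Qed.
Lemma ap_compose {A B C} (h : A -> B) (k : B -> C) {x y : A} (p : Id x y) :
  ap k (ap h p) = ap (fun x => k (h x)) p.
Proof. destruct p; reflexivity. Qed.
Lemma ap_idmap {A} {x y : A} (p : Id x y) : ap (fun x => x) p = p.
Proof. destruct p; reflexivity. Qed.
Lemma natural {A B} {u v : A -> B} (H : forall x, Id (u x) (v x)) {x y : A} (r : Id x y) :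
  concat (ap u r) (H y) = concat (H x) (ap v r).
Proof. destruct r; simpl; apply concat_1p. Qed.
Lemma cancel_r {A} {x y z : A} (p q : Id x y) (r : Id y z) :
  concat p r = concat q r -> p = q.
Proof. destruct r; simpl; trivial. Qed.
Lemma homotopy_ap {A} (k : A -> A) (H : forall x, Id (k x) x) (x : A) :
  ap k (H x) = H (k x).
Proof.
  pose proof (natural H (H x)) as E. rewrite ap_idmap in E.
  exact (cancel_r _ _ _ E).
Qed.

Section Adjointify.
Context {A B : Type} (f : A -> B) (g : B -> A)
  (eta : forall a, Id (g (f a)) a) (eps : forall b, Id (f (g b)) b).

Definition eps' (b : B) : Id (f (g b)) b :=
  concat (inv (eps (f (g b)))) (concat (ap f (eta (g b))) (eps b)).

Lemma tau (a : A) : eps' (f a) = ap f (eta a).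
Proof.
  unfold eps'.
  rewrite <- (homotopy_ap (fun x => g (f x)) eta a).
  assert (E : ap f (ap (fun x => g (f x)) (eta a))
              = ap (fun y => f (g y)) (ap f (eta a))).
  { transitivity (ap (fun x => f (g (f x))) (eta a)).
    - exact (ap_compose (fun x => g (f x)) f (eta a)).
    - symmetry. exact (ap_compose f (fun y => f (g y)) (eta a)). }
  rewrite E.
  rewrite (natural (u := fun y => f (g y)) (v := fun y => y) eps (ap f (eta a))).
  rewrite ap_idmap, concat_assoc, concat_Vp. apply concat_1p.
Qed.

Lemma path_fib {y : B} (x x' : A) (p : Id (f x) y) (p' : Id (f x') y)
  (e : Id x x') (H : concat (ap f e) p' = p) :
  Id (existT (fun z => Id (f z) y) x p) (existT _ x' p').
Proof. destruct e. change (concat refl p' = p) in H. rewrite concat_1p in H. destruct H. exact refl. Defined.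

Definition qinv_isequiv : isequiv f.
Proof.
  intro y. exists (existT _ (g y) (eps' y)).
  intros [x p]. destruct p.
  apply (path_fib _ _ _ _ (eta x)).
  symmetry. apply tau.
Defined.
End Adjointify.

Definition biinv_isequiv {A B : Type} (f : A -> B) (b : biinv f) : isequiv f.
Proof.
  destruct b as [[g p] [h q]].
  pose (gh := fun y => concat (ap g (inv (happly q y))) (happly p (h y))).
  exact (qinv_isequiv f g (happly p) (fun y => concat (ap f (gh y)) (happly q y))).
Defined.

Definition pi_map {A B : BipType} (f : Bip A B) (e : isbipequiv f) : isequiv (projT1 f) :=
  biinv_isequiv (projT1 f) (bip_to_biinv f e).


(* If the underlying function of [f] is an equivalence, pre- and post-composition
   with [f] are equivalences between types of bipointed morphisms, so their fibres
   over the identities, i.e. the two halves of [isbipequiv f], are contractible.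
   (By path induction on the pointing paths of [f] it suffices to take them
   reflexive.) Hence [pi_map f] is a map from a type that is contractible as
   soon as the proposition [isequiv (projT1 f)] is inhabited, and is therefore
   an equivalence. *)

Lemma Id_eq {X} {x y : X} : Id x y -> x = y.
Proof. intros []; reflexivity. Defined.

Lemma eq_Id {X} {x y : X} : x = y -> Id x y.
Proof. intros []; exact refl. Defined.

Lemma ap_concat {X Y} (h : X -> Y) {x y z : X} (p : Id x y) (q : Id y z) :
  ap h (concat p q) = concat (ap h p) (ap h q).
Proof. destruct q; reflexivity. Qed.

Lemma natural_idmap {X} {u : X -> X} (H : forall x, Id (u x) x) {x y : X} (r : Id x y) :
  concat (ap u r) (H y) = concat (H x) r.
Proof. rewrite (natural H r). now rewrite ap_idmap. Qed.

Definition isProp (X : Type) : Type := forall x y : X, Id x y.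

Lemma contr_paths_prop {X} (P : isProp X) (x y : X) : iscontr (Id x y).
Proof.
  exists (concat (inv (P x x)) (P x y)).
  intros []. apply eq_Id, concat_Vp.
Qed.

Lemma prop_contr {X} : iscontr X -> isProp X.
Proof. intros [c h] x y. exact (concat (inv (h x)) (h y)). Qed.

Lemma path_Bip_of_path {A B : BipType} (u v : Bip A B) (p : Id (projT1 u) (projT1 v))
  (E0 : fst (projT2 u) = concat (happly p (bpt0 A)) (fst (projT2 v)))
  (E1 : snd (projT2 u) = concat (happly p (bpt1 A)) (snd (projT2 v))) : Id u v.
Proof.
  destruct u as [k [k0 k1]], v as [k' [k0' k1']]; simpl in *.
  destruct p; simpl in E0, E1.
  rewrite concat_1p in E0; rewrite concat_1p in E1; subst. exact refl.
Qed.

Section Funext.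
Variable funext : Funext.

Definition path_forall {X} {P : X -> Type} {u v : forall x, P x}
  (H : forall x, Id (u x) (v x)) : Id u v :=
  projT1 (projT1 (funext X P u v H)).

Lemma happly_path_forall {X} {P : X -> Type} {u v : forall x, P x}
  (H : forall x, Id (u x) (v x)) : happly (path_forall H) = H.
Proof. exact (Id_eq (projT2 (projT1 (funext X P u v H)))). Qed.

Lemma prop_forall {X} {P : X -> Type} : (forall x, isProp (P x)) -> isProp (forall x, P x).
Proof. intros H u v. exact (path_forall (fun x => H x (u x) (v x))). Qed.

Lemma prop_iscontr (X : Type) : isProp (iscontr X).
Proof.
  intros c c'.
  pose proof (prop_contr c) as PX.
  destruct c as [c h], c' as [c' h'].
  revert h'. destruct (h c'). intro h'.
  assert (E : Id h h').
  { apply prop_forall. intro y. apply prop_contr, contr_paths_prop, PX. }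
  destruct E. exact refl.
Qed.

Lemma prop_isequiv {X Y} (f : X -> Y) : isProp (isequiv f).
Proof. apply prop_forall. intro y. apply prop_iscontr. Qed.

Lemma path_Bip {A B : BipType} (u v : Bip A B)
  (H : forall x, Id (projT1 u x) (projT1 v x))
  (E0 : fst (projT2 u) = concat (H (bpt0 A)) (fst (projT2 v)))
  (E1 : snd (projT2 u) = concat (H (bpt1 A)) (snd (projT2 v))) : Id u v.
Proof.
  apply (path_Bip_of_path u v (path_forall H)); now rewrite happly_path_forall.
Qed.

End Funext.

Lemma contr_sigma {X} {P : X -> Type} :
  iscontr X -> (forall x, iscontr (P x)) -> iscontr {x : X & P x}.
Proof.
  intros [c h] cP.
  exists (existT _ c (projT1 (cP c))).
  intros [x p]. destruct (h x), (projT2 (cP c) p). exact refl.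
Qed.

Lemma contr_prod {X Y} : iscontr X -> iscontr Y -> iscontr (X * Y).
Proof.
  intros [x h] [y k]. exists (x, y).
  intros [x' y']. destruct (h x'), (k y'). exact refl.
Qed.

Lemma isequiv_to_prop {X Y} (h : X -> Y) :
  (Y -> iscontr X) -> isProp Y -> isequiv h.
Proof.
  intros cX PY y. apply (contr_sigma (cX y)).
  intro x. apply contr_paths_prop, PY.
Qed.

Definition equiv_inv {X Y} {f : X -> Y} (e : isequiv f) (b : Y) : X :=
  projT1 (projT1 (e b)).

Definition eisretr {X Y} {f : X -> Y} (e : isequiv f) (b : Y) : Id (f (equiv_inv e b)) b :=
  projT2 (projT1 (e b)).

Definition eissect {X Y} {f : X -> Y} (e : isequiv f) (a : X) : Id (equiv_inv e (f a)) a :=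
  ap (@projT1 X (fun x => Id (f x) (f a))) (projT2 (e (f a)) (existT _ a refl)).

Section ComposeEquiv.
Variables (funext : Funext) (A B : Type) (f : A -> B) (e : isequiv f) (a0 a1 : A).

Let AA : BipType := {| bcar := A; bpt0 := a0; bpt1 := a1 |}.
Let BB : BipType := {| bcar := B; bpt0 := f a0; bpt1 := f a1 |}.
Let F : Bip AA BB := existT _ f (refl, refl).
Let g : B -> A := equiv_inv e.
Let eta : forall a, Id (g (f a)) a := eissect e.
(* The adjointified counit, so that [eps (f a) = ap f (eta a)]. *)
Let eps : forall b, Id (f (g b)) b := eps' f g eta (eisretr e).

Ltac apply_path_Bip X Y H :=
  lazymatch goal with |- Id ?u ?v => apply (@path_Bip funext X Y u v H) end.

Lemma isequiv_bcomp_r (C : BipType) : isequiv (fun h : Bip BB C => bcomp h F).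
Proof.
  refine (qinv_isequiv _ (fun k : Bip AA C =>
    existT _ (fun b => projT1 k (g b))
      (concat (ap (projT1 k) (eta a0)) (fst (projT2 k)),
       concat (ap (projT1 k) (eta a1)) (snd (projT2 k)))) _ _).
  - intros [h [h0 h1]].
    apply_path_Bip BB C (fun b => ap h (eps b)); simpl;
      rewrite concat_1p, (tau f g eta (eisretr e)), ap_compose; reflexivity.
  - intros [k [k0 k1]].
    apply_path_Bip AA C (fun a => ap k (eta a)); apply concat_1p.
Qed.

Lemma isequiv_bcomp_l (C : BipType) : isequiv (fun h : Bip C AA => bcomp F h).
Proof.
  refine (qinv_isequiv _ (fun k : Bip C BB =>
    existT _ (fun c => g (projT1 k c))
      (concat (ap g (fst (projT2 k))) (eta a0),
       concat (ap g (snd (projT2 k))) (eta a1))) _ _).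
  - intros [h [h0 h1]].
    apply_path_Bip C AA (fun c => eta (h c)); simpl;
      rewrite ap_compose; exact (natural_idmap eta _).
  - intros [k [k0 k1]].
    apply_path_Bip C BB (fun c => eps (k c)); simpl;
      rewrite ap_concat, <- (tau f g eta (eisretr e)), ap_compose;
      exact (natural_idmap eps _).
Qed.

End ComposeEquiv.

Lemma contr_isbipequiv (funext : Funext) {A B : BipType} (f : Bip A B) :
  isequiv (projT1 f) -> iscontr (isbipequiv f).
Proof.
  destruct A as [A a0 a1], B as [B b0 b1], f as [f [f0 f1]]; simpl in *.
  destruct f0, f1. intro e.
  apply contr_prod.
  - exact (isequiv_bcomp_r funext A B f e a0 a1 _ (bid _)).
  - exact (isequiv_bcomp_l funext A B f e a0 a1 _ (bid _)).
Qed.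

Theorem mainTheorem7 (funext : Funext) (A B : BipType) (f : Bip A B) :
  (isequiv (pi_map f) *
   ((isbipequiv f -> isequiv (projT1 f)) * (isequiv (projT1 f) -> isbipequiv f)))%type.
Proof.
  split; [|split].
  - exact (isequiv_to_prop _ (contr_isbipequiv funext f) (prop_isequiv funext _)).
  - exact (pi_map f).
  - intro e. exact (projT1 (contr_isbipequiv funext f e)).
Qed.
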